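(* Suppose $H$ satisfies (B1) and (B2), and for $\alpha>0$ let $v^\alpha$ be the viscosity solution of (DP). There exists a constant $C>0$ such that for all $\alpha>0$, $$\|Dv^\alpha\|_{L^\infty(\mathbb{T}^d\times I)}+\|\Theta v^\alpha\|_{L^\infty(\mathbb{T}^d\times I)}\le C,$$ where $\Theta v(x,\xi):=\int_I k(\xi,\eta)(v(x,\xi)-v(x,\eta))\,d\eta$.
   Context: $I\subset\mathbb{R}$ finite interval, $|I|=1$; $k$ Borel measurable on $I\times I$ with $0<k_0\le k\le k_1$. $H\in C(\mathbb{T}^d\times\mathbb{R}^d)\otimes\mathcal{B}(I)$ with $H(\cdot,p,\cdot)$ bounded for each $p$. (DP): $\alpha v(x,\xi)+H(x,Dv(x,\xi),\xi)+\int_I k(\xi,\eta)(v(x,\xi)-v(x,\eta))d\eta=0$ in $\mathbb{T}^d\times I$ in the viscosity sense; it has a unique viscosity solution $v^\alpha\in C(\mathbb{T}^d)\otimes\mathcal{B}(I)$ with $|v^\alpha|\le M/\alpha$, $M:=\sup|H(\cdot,0,\cdot)|$. (B1): $C_1|p|^m-C_2\le H(x,p,\xi)$ for constants $C_1,C_2>0$, $m>1$. (B2): for each $R>0$ a modulus $\omega_R$ with $|H(x,p,\xi)-H(y,p,\xi)|\le\omega_R(|x-y|)$ for $|p|\le R$. *)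

From HB Require Import structures.
From mathcomp Require Import all_boot all_order all_algebra.
From mathcomp Require Import all_classical all_reals all_analysis.
Set Implicit Arguments. Unset Strict Implicit. Unset Printing Implicit Defensive.
Import Order.TTheory GRing.Theory Num.Theory.
Import numFieldNormedType.Exports.
Local Open Scope classical_set_scope.
Local Open Scope ring_scope.

Section Defs.
Variables (R : realType) (d : nat).
Notation vec := 'rV[R]_d.

Definition Iint (a : R) : set R := `[a, a + 1].

Definition evec (i : 'I_d) : vec := delta_mx 0 i.

Definition enorm (p : vec) : R := Num.sqrt (\sum_(i < d) (p 0 i) ^+ 2).

(* Z^d-periodic functions on R^d = functions on the torus T^d *)
Definition periodic (T : Type) (f : vec -> T) : Prop :=
  forall (i : 'I_d) (x : vec), f (x + evec i) = f x.

Definition C1 (phi : vec -> R) : Prop :=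
  forall i : 'I_d, (forall x, derivable phi x (evec i)) /\
                   continuous (fun x => 'D_(evec i) phi x).

Definition grad (phi : vec -> R) (x : vec) : vec :=
  \row_(i < d) 'D_(evec i) phi x.

Definition Theta (a : R) (k : R -> R -> R) (v : vec -> R -> R) (x : vec) (xi : R) : R :=
  \int[@lebesgue_measure R]_(eta in Iint a) (k xi eta * (v x xi - v x eta)).

Definition admissible (a : R) (v : vec -> R -> R) : Prop :=
  (forall xi, Iint a xi -> continuous (fun x => v x xi) /\ periodic (fun x => v x xi)) /\
  (forall x, measurable_fun (Iint a) (v x)) /\
  (exists B : R, forall x xi, Iint a xi -> `|v x xi| <= B).

(* viscosity sub/super-solution of (DP):
   alpha v + H(x, Dv, xi) + Theta v = 0 in T^d x I; the equation is tested in x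
   for each fixed xi, the nonlocal term being evaluated on v itself. *)
Definition visc_sub (alpha a : R) (H : vec -> vec -> R -> R) (k : R -> R -> R)
    (v : vec -> R -> R) : Prop :=
  forall xi, Iint a xi -> forall (phi : vec -> R) (x0 : vec), C1 phi ->
    (\forall x \near x0, v x xi - phi x <= v x0 xi - phi x0) ->
    alpha * v x0 xi + H x0 (grad phi x0) xi + Theta a k v x0 xi <= 0.

Definition visc_super (alpha a : R) (H : vec -> vec -> R -> R) (k : R -> R -> R)
    (v : vec -> R -> R) : Prop :=
  forall xi, Iint a xi -> forall (phi : vec -> R) (x0 : vec), C1 phi ->
    (\forall x \near x0, v x xi - phi x >= v x0 xi - phi x0) ->
    alpha * v x0 xi + H x0 (grad phi x0) xi + Theta a k v x0 xi >= 0.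

Definition visc_sol alpha a H k v : Prop :=
  admissible a v /\ visc_sub alpha a H k v /\ visc_super alpha a H k v.

Definition kernel_hyp (a : R) (k : R -> R -> R) (k0 k1 : R) : Prop :=
  measurable_fun (Iint a `*` Iint a) (fun z : R * R => k z.1 z.2) /\
  0 < k0 /\ forall xi eta, Iint a xi -> Iint a eta -> k0 <= k xi eta <= k1.

Definition ham_hyp (a : R) (H : vec -> vec -> R -> R) : Prop :=
  (forall xi, Iint a xi ->
     continuous (fun xp : vec * vec => H xp.1 xp.2 xi) /\
     forall p, periodic (fun x => H x p xi)) /\
  (forall x p, measurable_fun (Iint a) (H x p)) /\
  (forall p, exists M : R, forall x xi, Iint a xi -> `|H x p xi| <= M).

Definition B1 (a : R) (H : vec -> vec -> R -> R) : Prop :=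
  exists C1 C2 m : R, 0 < C1 /\ 0 < C2 /\ 1 < m /\
    forall x p xi, Iint a xi -> C1 * (enorm p `^ m) - C2 <= H x p xi.

Definition modulus (w : R -> R) : Prop :=
  w 0 = 0 /\ (forall r s, 0 <= r -> r <= s -> 0 <= w r <= w s) /\
  w r @[r --> 0^'+] --> 0.

Definition B2 (a : R) (H : vec -> vec -> R -> R) : Prop :=
  forall Rad : R, 0 < Rad -> exists w : R -> R, modulus w /\
    forall x y p xi, Iint a xi -> enorm p <= Rad ->
      `|H x p xi - H y p xi| <= w (enorm (x - y)).

(* Lipschitz in x w.r.t. the Euclidean norm, i.e. ||D f||_{L^oo} <= L *)
Definition lipschitz_const (f : vec -> R) (L : R) : Prop :=
  forall x y, `|f x - f y| <= L * enorm (x - y).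

End Defs.

(* A priori bounds, uniform in the discount [alpha], for viscosity solutions
   [v] of the weakly coupled system
       alpha v + H (x, Dv, xi) + Theta v = 0   on  T^d x I.
   1. Maximum principle: at a maximum point of a section [v (., xi)] the
      constant test function is admissible and [Theta v] is almost
      nonnegative; hence [|alpha v| <= M := sup |H (., 0, .)|].
   2. Gap: [gap (x, xi) = sup_eta v (x, eta) - v (x, xi) >= 0] satisfies
      [Theta v >= - k1 gap].  With (B1) the subsolution inequality bounds the
      gradient of every C^1 function touching [v (., xi)] from above, and a
      smooth-cone argument turns this into a Lipschitz bound [L (U)] whenever
      [gap <= U].
   3. Comparing [Theta v] with its value at an extremum of the section, where
      the equation bounds it, gives [|Theta v| <= 2 M + k1 L (U) sqrt d],
      since a periodic L-Lipschitz function oscillates by at most [L sqrt d].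
   4. Integrating against the kernel, a bound on [Theta v] bounds the gap
      affinely; for a large parameter [G] the dependence on [U] is absorbed,
      giving a bound on the gap that depends neither on [alpha] nor on [v]. *)

From mathcomp Require Import all_boot all_order all_algebra.
From mathcomp Require Import all_classical all_reals all_analysis.
From mathcomp Require Import ring lra measurable_realfun.
Set Implicit Arguments. Unset Strict Implicit. Unset Printing Implicit Defensive.
Import Order.TTheory GRing.Theory Num.Theory.
Import numFieldNormedType.Exports.
Local Open Scope classical_set_scope.
Local Open Scope ring_scope.

Section PointwiseContinuity.
Variables (T : topologicalType) (R : realType).
Implicit Types f g : T -> R.

Lemma continuous_add f g : continuous f -> continuous g -> continuous (fun x => f x + g x).
Proof. by move=> cf cg x; apply: cvgD; [exact: cf | exact: cg]. Qed.

Lemma continuous_sub f g : continuous f -> continuous g -> continuous (fun x => f x - g x).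
Proof. by move=> cf cg x; apply: cvgB; [exact: cf | exact: cg]. Qed.

Lemma continuous_mul f g : continuous f -> continuous g -> continuous (fun x => f x * g x).
Proof. by move=> cf cg x; apply: cvgM; [exact: cf | exact: cg]. Qed.

Lemma continuous_inv f : (forall x, f x != 0) -> continuous f -> continuous (fun x => (f x)^-1).
Proof. by move=> f0 cf x; apply: cvgV; [exact: f0 | exact: cf]. Qed.

Lemma continuous_sum n (f : 'I_n -> T -> R) :
  (forall j, continuous (f j)) -> continuous (fun x => \sum_(j < n) f j x).
Proof.
move=> cf; have -> : (fun x => \sum_(j < n) f j x) = \sum_(j < n) f j.
  by apply/funext => x; rewrite fct_sumE.
elim/big_ind: _ => [|g h cg ch|j _]; [exact: cst_continuous | | exact: cf].
by move=> x; apply: cvgD; [exact: cg | exact: ch].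
Qed.
End PointwiseContinuity.

Section SmoothCone.
Variables (R : realType) (d : nat).
Local Notation vec := 'rV[R]_d.

Lemma evecE (i j : 'I_d) : evec R i 0 j = (i == j)%:R.
Proof. by rewrite /evec mxE /= eq_sym. Qed.

Lemma enorm_ge0 (x : vec) : 0 <= enorm x.
Proof. exact: sqrtr_ge0. Qed.

Lemma enorm_sqr (x : vec) : enorm x ^+ 2 = \sum_(j < d) (x 0 j) ^+ 2.
Proof. by rewrite /enorm sqr_sqrtr // sumr_ge0 // => j _; exact: sqr_ge0. Qed.

Lemma enormC (x y : vec) : enorm (x - y) = enorm (y - x).
Proof.
by rewrite /enorm; congr Num.sqrt; apply: eq_bigr => j _; rewrite !mxE -sqrrN opprB.
Qed.

Lemma coord_le_enorm (x : vec) j : `|x 0 j| <= enorm x.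
Proof.
rewrite /enorm -(sqrtr_sqr (x 0 j)) ler_sqrt; last by rewrite sumr_ge0 // => i _; exact: sqr_ge0.
by rewrite (bigD1 j) //= lerDl sumr_ge0 // => i _; exact: sqr_ge0.
Qed.

Lemma is_derive_restriction (f : vec -> R) (z v : vec) (df : R) :
  is_derive (0:R) 1 (fun t => f (z + t *: v)) df -> is_derive z v f df.
Proof.
move=> [fd dfE].
have E : (fun h : R => h^-1 *: (((fun t => f (z + t *: v)) \o shift 0) (h *: 1)
                                 - (fun t => f (z + t *: v)) 0))
       = (fun h => h^-1 *: ((f \o shift z) (h *: v) - f z)).
  by apply/funext => h /=; rewrite addr0 scale0r addr0 /GRing.scale /= mulr1 [_ + z]addrC.
by split; [move: fd; rewrite /derivable E | move: dfE; rewrite /derive E].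
Qed.

(* The smooth cone [z |-> L sqrt (e + |z - w|^2)] with vertex [w]: for [e > 0]
   it is a C^1 approximation of [L |z - w|], our test function. *)
Definition cone_sq (w : vec) (e : R) (z : vec) : R :=
  e + \sum_(j < d) (z 0 j - w 0 j) ^+ 2.

Definition cone (w : vec) (e L : R) (z : vec) : R := L * Num.sqrt (cone_sq w e z).

Lemma cone_sqE w e z : cone_sq w e z = e + enorm (z - w) ^+ 2.
Proof. by rewrite enorm_sqr /cone_sq; congr (_ + _); apply: eq_bigr => j _; rewrite !mxE. Qed.

Lemma cone_sq_gt0 w e z : 0 < e -> 0 < cone_sq w e z.
Proof. by move=> e0; rewrite cone_sqE ltr_wpDr // sqr_ge0. Qed.

Lemma cone_sq_center w e : cone_sq w e w = e.
Proof. by rewrite /cone_sq big1 ?addr0 // => j _; rewrite subrr expr0n. Qed.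

Lemma is_derive_sum_sqr n (c s : 'I_n -> R) (e : R) :
  is_derive (0:R) 1 (fun t => e + \sum_(j < n) (c j + t * s j) ^+ 2)
    (\sum_(j < n) 2 * c j * s j).
Proof.
have line j : is_derive (0:R) 1 (fun t : R => c j + t * s j) (s j).
  have := is_deriveD (is_derive_cst (c j) (0:R) 1) (is_deriveZ (s j) (is_derive_id (0:R) 1)).
  rewrite add0r /GRing.scale /= mulr1 => h.
  by have -> : (fun t : R => c j + t * s j) = (fun t => c j + s j * t)
    by apply/funext => t; rewrite mulrC.
have square j : is_derive (0:R) 1 (fun t : R => (c j + t * s j) ^+ 2) (2 * c j * s j).
  have := is_deriveX 2 (line j).
  by rewrite /= mul0r addr0 expr1 /GRing.scale.
have := is_deriveD (is_derive_cst e (0:R) 1) (is_derive_sum square).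
rewrite add0r.
by have -> : (fun t => e + \sum_(j < n) (c j + t * s j) ^+ 2)
          = (cst e + \sum_(j < n) (fun t => (c j + t * s j) ^+ 2))
  by apply/funext => t /=; rewrite fct_sumE.
Qed.

Lemma is_derive_cone w z e L (i : 'I_d) : 0 < e ->
  is_derive z (evec R i) (cone w e L) (L * ((z 0 i - w 0 i) / Num.sqrt (cone_sq w e z))).
Proof.
move=> e0; apply: is_deriveZ; apply: is_derive_restriction.
pose c j := z 0 j - w 0 j; pose s j := evec R i 0 j.
pose q t := e + \sum_(j < d) (c j + t * s j) ^+ 2.
have q0E : q 0 = cone_sq w e z.
  by rewrite /q /cone_sq; congr (_ + _); apply: eq_bigr => j _; rewrite mul0r addr0.
have dsqrt : is_derive (q 0) 1 Num.sqrt (2 * Num.sqrt (q 0))^-1.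
  by apply: is_derive1_sqrt; rewrite q0E cone_sq_gt0.
have := is_derive1_comp dsqrt (is_derive_sum_sqr c s e).
have -> : (2 * Num.sqrt (q 0))^-1 * \sum_(j < d) 2 * c j * s j
          = (z 0 i - w 0 i) / Num.sqrt (cone_sq w e z).
  rewrite q0E (bigD1 i) //= big1 ?addr0; last first.
    by move=> j /negbTE ji; rewrite /s evecE eq_sym ji mulr0.
  have sq0 : Num.sqrt (cone_sq w e z) != 0 by rewrite gt_eqF // sqrtr_gt0 cone_sq_gt0.
  by rewrite /s /c evecE eqxx mulr1; field.
have -> : (Num.sqrt \o q) = (fun t => Num.sqrt (cone_sq w e (z + t *: evec R i))) => //.
apply/funext => t /=; congr Num.sqrt; rewrite /q /cone_sq; congr (_ + _).
by apply: eq_bigr => j _; rewrite /c /s !mxE; congr (_ ^+ 2); rewrite /GRing.scale /=; ring.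
Qed.

Lemma continuous_coord_sub (w : vec) (j : 'I_d) : continuous (fun z : vec => z 0 j - w 0 j).
Proof. by apply: continuous_sub; [exact: coord_continuous | exact: cst_continuous]. Qed.

Lemma continuous_cone_sq w e : continuous (cone_sq w e).
Proof.
rewrite /cone_sq; apply: continuous_add; first exact: cst_continuous.
apply: continuous_sum => j.
have -> : (fun z : vec => (z 0 j - w 0 j) ^+ 2)
        = (fun z => (z 0 j - w 0 j) * (z 0 j - w 0 j)) by apply/funext => z; rewrite expr2.
by apply: continuous_mul; exact: continuous_coord_sub.
Qed.

Lemma continuous_sqrt_cone_sq w e : continuous (fun z => Num.sqrt (cone_sq w e z)).
Proof. by move=> z; apply: continuous_comp; [exact: continuous_cone_sq | exact: sqrt_continuous]. Qed.

Lemma continuous_cone w e L : continuous (cone w e L).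
Proof.
by apply: continuous_mul; [exact: cst_continuous | exact: continuous_sqrt_cone_sq].
Qed.

Lemma cone_C1 w e L : 0 < e -> C1 (cone w e L).
Proof.
move=> e0 i; split; first by move=> x; case: (is_derive_cone w x L i e0).
have -> : (fun x => 'D_(evec R i) (cone w e L) x) =
          (fun x => L * ((x 0 i - w 0 i) / Num.sqrt (cone_sq w e x))).
  by apply/funext => x; case: (is_derive_cone w x L i e0).
apply: continuous_mul; first exact: cst_continuous.
apply: continuous_mul; first exact: continuous_coord_sub.
apply: continuous_inv; last exact: continuous_sqrt_cone_sq.
by move=> x; rewrite gt_eqF // sqrtr_gt0 cone_sq_gt0.
Qed.

(* The gradient of the cone has norm [L r / sqrt (e + r^2)] with [r = |z - w|]:
   it is strictly below [L] and close to [L] away from the vertex. *)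
Lemma cone_grad_norm w z e L : 0 < e -> 0 <= L ->
  enorm (grad (cone w e L) z) = L / Num.sqrt (cone_sq w e z) * enorm (z - w).
Proof.
move=> e0 L0; have sq0 : 0 < Num.sqrt (cone_sq w e z) by rewrite sqrtr_gt0 cone_sq_gt0.
rewrite {1}/enorm.
have -> : \sum_(i < d) grad (cone w e L) z 0 i ^+ 2 =
          (L / Num.sqrt (cone_sq w e z)) ^+ 2 * \sum_(i < d) (z - w) 0 i ^+ 2.
  rewrite mulr_sumr; apply: eq_bigr => i _.
  rewrite /grad mxE; case: (is_derive_cone w z L i e0) => _ ->.
  by rewrite !mxE; field; rewrite gt_eqF.
by rewrite sqrtrM ?sqr_ge0 // sqrtr_sqr ger0_norm // divr_ge0 // ltW.
Qed.

Lemma cone_center w e L : 0 <= e -> cone w (e ^+ 2) L w = L * e.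
Proof. by move=> e0; rewrite /cone cone_sq_center sqrtr_sqr ger0_norm. Qed.

Lemma cone_ge w e L z : 0 <= e -> 0 <= L -> L * enorm (z - w) <= cone w (e ^+ 2) L z.
Proof.
move=> e0 L0; rewrite /cone cone_sqE; apply: ler_wpM2l => //.
rewrite -[X in X <= _](ger0_norm (enorm_ge0 (z - w))) -sqrtr_sqr ler_sqrt.
  by rewrite lerDr sqr_ge0.
by rewrite addr_ge0 ?sqr_ge0.
Qed.

Lemma cone_le w e L z : 0 <= e -> 0 <= L -> cone w (e ^+ 2) L z <= L * (e + enorm (z - w)).
Proof.
move=> e0 L0; rewrite /cone cone_sqE; apply: ler_wpM2l => //.
have r0 := enorm_ge0 (z - w).
rewrite -[X in _ <= X](ger0_norm (addr_ge0 e0 r0)) -sqrtr_sqr ler_sqrt ?sqr_ge0 //.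
by rewrite sqrrD addrAC lerDl mulrn_wge0 // mulr_ge0.
Qed.
End SmoothCone.

Section Maxima.
Variables (R : realType) (d : nat).
Local Notation vec := 'rV[R]_d.

Lemma mxnorm_le (x : vec) c : 0 <= c -> (forall j, `|x 0 j| <= c) -> `|x| <= c.
Proof.
move=> c0 h; rewrite [`|x|]mx_normrE; apply: bigmax_le => // -[i j] _ /=.
by rewrite (ord1 i); exact: h.
Qed.

(* Continuity expressed with the Euclidean norm [enorm] (the topology of
   ['rV_d] is the one of the sup norm, which [enorm] dominates). *)
Lemma continuous_enorm (g : vec -> R) y : continuous g ->
  forall e, 0 < e -> exists2 r, 0 < r & forall z, enorm (z - y) < r -> `|g z - g y| < e.
Proof.
move=> cg e e0; have near_y := cvgr_distC_lt _ _ (cg y) _ e0.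
have [r /= r0 hr] := proj1 (nbhs_normP _ _) (near_y ltac:(exact: nbhs_filter)).
exists r => // z hz; apply: hr => /=; rewrite -normrN opprB.
by apply: le_lt_trans hz; apply: mxnorm_le; [exact: enorm_ge0 | exact: coord_le_enorm].
Qed.

Lemma attains_max_of_decay (h : vec -> R) (y : vec) (r : R) :
  continuous h -> 0 <= r ->
  (forall z : vec, (exists j, r < `|z 0 j - y 0 j|) -> h z < h y) ->
  exists z, forall w, h w <= h z.
Proof.
move=> ch r0 hout.
pose K := [set v : vec | forall j, `[y 0 j - r, y 0 j + r]%classic (v 0 j)].
have cK : compact K.
  by apply: (@rV_compact _ d (fun j => `[y 0 j - r, y 0 j + r]%classic)) => j;
     exact: segment_compact.
have yK : K y by move=> j /=; rewrite in_itv /=; apply/andP; split; lra.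
have [c _ hc] := EVT_max_rV (ex_intro _ y yK) cK (@continuous_subspaceT _ _ K h ch).
have hy : h y <= h c by apply: hc; rewrite inE.
exists c => w; have [wK|wK] := pselect (K w); first by apply: hc; rewrite inE.
have far : exists j, r < `|w 0 j - y 0 j|.
  apply: contra_notP wK => near j /=; rewrite in_itv /=.
  have : ~ r < `|w 0 j - y 0 j| by move=> hj; apply: near; exists j.
  by move/negP; rewrite -leNgt ler_distlC => /andP[h1 h2]; apply/andP; split; lra.
exact: le_trans (ltW (hout w far)) hy.
Qed.

Lemma periodic_shift (T : Type) (f : vec -> T) i (n : nat) x : periodic f ->
  f (x + n%:R *: evec R i) = f x /\ f (x - n%:R *: evec R i) = f x.
Proof.
move=> pf; elim: n => [|n [IHp IHn]]; first by rewrite scale0r addr0 subr0.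
split; [rewrite -[RHS]IHp -(pf i (x + n%:R *: evec R i)) | rewrite -[RHS]IHn -(pf i (x - n.+1%:R *: evec R i))];
  by congr f; apply/rowP => j; rewrite !mxE mulrSr; ring.
Qed.

Lemma periodic_shift_int (T : Type) (f : vec -> T) (n : 'I_d -> int) y : periodic f ->
  f (y - \sum_(j < d) (n j)%:~R *: evec R j) = f y.
Proof.
move=> pf; elim/big_ind: _ y => [|s1 s2 h1 h2|j _] y; first by rewrite subr0.
  by rewrite opprD addrA h2 h1.
case: (n j) => m; first by rewrite -pmulrn (periodic_shift _ _ _ pf).2.
by rewrite NegzE mulrNz scaleNr opprK -pmulrn (periodic_shift _ _ _ pf).1.
Qed.

Lemma sum_evec_coord (c : 'I_d -> R) j : (\sum_(i < d) c i *: evec R i) 0 j = c j.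
Proof.
rewrite summxE (bigD1 j) //= big1 ?addr0; last first.
  by move=> i ij; rewrite !mxE /= eq_sym (negbTE ij) mulr0.
by rewrite !mxE /= eqxx mulr1.
Qed.

Lemma periodic_reduce (T : Type) (f : vec -> T) (x y : vec) : periodic f ->
  exists y' : vec, f y' = f y /\ forall j, x 0 j <= y' 0 j <= x 0 j + 1.
Proof.
move=> pf; pose n j := Num.floor (y 0 j - x 0 j).
exists (y - \sum_(j < d) (n j)%:~R *: evec R j); split; first exact: periodic_shift_int.
move=> j; rewrite !mxE sum_evec_coord /n.
have := Num.Theory.floor_le (y 0 j - x 0 j).
have := Num.Theory.floorD1_gt (y 0 j - x 0 j); rewrite intrD.
by move=> h1 h2; apply/andP; split; lra.
Qed.

Lemma periodic_osc (g : vec -> R) L : periodic g -> lipschitz_const g L -> 0 <= L ->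
  forall x y, `|g x - g y| <= L * Num.sqrt d%:R.
Proof.
move=> pg lg L0 x y; have [y' [<- hy']] := periodic_reduce x y pg.
apply: (le_trans (lg x y')); apply: ler_wpM2l => //.
rewrite /enorm ler_sqrt // -[d in d%:R]card_ord -sumr_const.
by apply: ler_sum => j _; rewrite !mxE; move: (hy' j) => /andP[h1 h2]; nra.
Qed.

Lemma periodic_max (g : vec -> R) : periodic g -> continuous g ->
  exists z, forall w, g w <= g z.
Proof.
move=> pg cg.
pose K := [set v : vec | forall j, `[(0:R), (1:R)]%classic (v 0 j)].
have cK : compact K.
  by apply: (@rV_compact _ d (fun j => `[(0:R), (1:R)]%classic)) => j; exact: segment_compact.
have K0 : K 0 by move=> j /=; rewrite mxE in_itv /= lexx ler01.
have [c _ hc] := EVT_max_rV (ex_intro _ 0 K0) cK (@continuous_subspaceT _ _ K g cg).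
exists c => w; have [w' [<- hw']] := periodic_reduce 0 w pg.
by apply: hc; rewrite inE => j /=; rewrite in_itv /=; move: (hw' j); rewrite mxE add0r.
Qed.

Lemma periodic_min (g : vec -> R) : periodic g -> continuous g ->
  exists z, forall w, g z <= g w.
Proof.
move=> pg cg.
have pg' : periodic (fun x => - g x) by move=> i x; rewrite /= pg.
have cg' : continuous (fun x => - g x) by move=> x; exact: (continuousN (cg x)).
by have [z hz] := periodic_max pg' cg'; exists z => w; have := hz w; rewrite lerN2.
Qed.
End Maxima.

(* If [L' r <= L sqrt (eps^2 + r^2)] with [L < L'] (the gradient bound at a
   point at distance [r] from the vertex of a cone of slope [L']), then [r] is
   of order [eps]; in particular [r < rho] once [eps] is small. *)
Lemma cone_touch_radius (R : realType) (L L' eps rho r : R) :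
  0 <= L -> L < L' -> 0 < eps -> 0 <= r ->
  L * eps < rho * Num.sqrt (L' ^+ 2 - L ^+ 2) ->
  L' * r <= L * Num.sqrt (eps ^+ 2 + r ^+ 2) -> r < rho.
Proof.
move=> L0 LL' eps0 r0 small touch.
have ka0 : 0 < L' ^+ 2 - L ^+ 2 by rewrite subr_gt0 ltr_pXn2r // ?nnegrE; lra.
set ka := L' ^+ 2 - L ^+ 2 in ka0 small.
have sq_ka : Num.sqrt ka ^+ 2 = ka by rewrite sqr_sqrtr // ltW.
have sq_q : Num.sqrt (eps ^+ 2 + r ^+ 2) ^+ 2 = eps ^+ 2 + r ^+ 2.
  by rewrite sqr_sqrtr // addr_ge0 ?sqr_ge0.
have touch2 : ka * r ^+ 2 <= L ^+ 2 * eps ^+ 2.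
  have : (L' * r) ^+ 2 <= (L * Num.sqrt (eps ^+ 2 + r ^+ 2)) ^+ 2.
    by rewrite ler_pXn2r // ?nnegrE ?mulr_ge0 ?sqrtr_ge0 //; lra.
  by rewrite !exprMn sq_q /ka; nra.
rewrite ltNge; apply/negP => rho_r.
have Leps0 : 0 <= L * eps by rewrite mulr_ge0 // ltW.
have sqrt_ka0 : 0 < Num.sqrt ka by rewrite sqrtr_gt0.
have rho0 : 0 < rho by nra.
have small2 : (L * eps) ^+ 2 < (rho * Num.sqrt ka) ^+ 2.
  by rewrite ltr_pXn2r // nnegrE; lra.
have : rho ^+ 2 * ka <= r ^+ 2 * ka.
  by rewrite ler_pM2r // ler_pXn2r // nnegrE ltW.
move: small2; rewrite !exprMn sq_ka; lra.
Qed.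

Lemma le_of_slopes (R : realType) (a L r : R) : 0 <= r ->
  (forall L' del, L < L' -> 0 < del -> a <= L' * r + del + del) -> a <= L * r.
Proof.
move=> r0 approx; apply/ler_addgt0Pr => e e0.
have step0 : 0 < e / (2 * (r + 1)) by apply: divr_gt0 => //; nra.
have := approx (L + e / (2 * (r + 1))) (e / 4) ltac:(lra) ltac:(lra).
have : e / (2 * (r + 1)) * r <= e / 2.
  rewrite mulrAC ler_pdivrMr; last by nra.
  have -> : e / 2 * (2 * (r + 1)) = e * (r + 1) by field.
  by nra.
nra.
Qed.

(* We touch [g] at a
   point near [y] by a smooth cone of slope [L' > L] with vertex [y]. *)
Section LipschitzCriterion.
Variables (R : realType) (d : nat) (g : 'rV[R]_d -> R) (B L : R).
Hypotheses (cg : continuous g) (gB : forall x, `|g x| <= B)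
  (test : forall (f : 'rV[R]_d -> R) z, C1 f ->
      (forall w, g w - f w <= g z - f z) -> enorm (grad f z) <= L).

(* Since [g] is bounded, [g - cone] attains its maximum: the cone exceeds
   the oscillation of [g] far from its vertex. *)
Lemma touching_point y L' eps : 0 < L' -> 0 < eps ->
  exists z, forall w, g w - cone y (eps ^+ 2) L' w <= g z - cone y (eps ^+ 2) L' z.
Proof.
move=> L'0 eps0; pose f := cone y (eps ^+ 2) L'.
have fy : f y = L' * eps by rewrite /f cone_center // ltW.
have B0 : 0 <= B := le_trans (normr_ge0 _) (gB 0).
apply: (@attains_max_of_decay _ _ _ y ((B + B + L' * eps + 1) / L')).
- by apply: continuous_sub => //; exact: continuous_cone.
- by apply: divr_ge0; [nra | exact: ltW].
move=> w [j far].
have := cone_ge y w (ltW eps0) (ltW L'0); rewrite -/f => fw.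
have := ler_wpM2l (ltW L'0) (coord_le_enorm (w - y) j); rewrite !mxE => wj.
move: far; rewrite ltr_pdivrMr // mulrC => far.
have := gB w; have := gB y; rewrite !ler_norml fy.
by move=> /andP[? ?] /andP[? ?]; lra.
Qed.

(* One approximate Lipschitz inequality: the point [z] where the cone of
   slope [L'] and height [eps] touches [g] is close to [y], since the
   gradient of the cone there has norm at most [L < L']. *)
Lemma lipschitz_approx x y L' del : 0 <= L -> L < L' -> 0 < del ->
  g x - g y <= L' * enorm (x - y) + del + del.
Proof.
move=> L0 LL' del0; have L'0 : 0 < L' by lra.
have [rho rho0 g_near_y] := continuous_enorm y cg del0.
have ska0 : 0 < Num.sqrt (L' ^+ 2 - L ^+ 2).
  by rewrite sqrtr_gt0 subr_gt0 ltr_pXn2r // ?nnegrE; lra.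
pose eps := Num.min (del / L') (rho * Num.sqrt (L' ^+ 2 - L ^+ 2) / (L + 1)).
have eps0 : 0 < eps.
  by rewrite lt_min; apply/andP; split; apply: divr_gt0 => //; [exact: mulr_gt0 | lra].
have eps_del : L' * eps <= del.
  by rewrite mulrC -ler_pdivlMr // ge_min lexx.
have eps_rho : L * eps < rho * Num.sqrt (L' ^+ 2 - L ^+ 2).
  have : eps * (L + 1) <= rho * Num.sqrt (L' ^+ 2 - L ^+ 2).
    by rewrite -ler_pdivlMr ?ge_min ?lexx ?orbT //; lra.
  by nra.
pose f := cone y (eps ^+ 2) L'.
have [z z_max] := touching_point y L'0 eps0.
set r := enorm (z - y).
have r0 : 0 <= r by exact: enorm_ge0.
have touch : L' * r <= L * Num.sqrt (eps ^+ 2 + r ^+ 2).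
  have := test (cone_C1 y L' (exprn_gt0 2 eps0)) z_max.
  rewrite cone_grad_norm ?exprn_gt0 // ?(ltW L'0) // cone_sqE -/r mulrAC.
  by rewrite ler_pdivrMr // sqrtr_gt0 ltr_wpDr ?sqr_ge0 ?exprn_gt0.
have gz : g z < g y + del.
  have := g_near_y z (cone_touch_radius L0 LL' eps0 r0 eps_rho touch).
  by rewrite ltr_norml => /andP[_ ?]; lra.
have := z_max x; have := cone_le y x (ltW eps0) (ltW L'0).
have : 0 <= f z by rewrite /f /cone mulr_ge0 ?sqrtr_ge0 // ltW.
rewrite -/f; nra.
Qed.

Lemma lipschitz_of_test : 0 <= L -> lipschitz_const g L.
Proof.
move=> L0.
have half x y : g x - g y <= L * enorm (x - y).
  by apply: le_of_slopes; [exact: enorm_ge0 | move=> *; exact: lipschitz_approx L0 _ _].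
move=> x y; rewrite ler_norml half andbT.
by have := half y x; rewrite enormC; lra.
Qed.
End LipschitzCriterion.

Section IntervalIntegral.
Variables (R : realType) (a : R).
Local Notation mu := (@lebesgue_measure R).
Local Notation I := (Iint a).

Definition bdd_meas (f : R -> R) : Prop :=
  measurable_fun I f /\ exists c, forall x, I x -> `|f x| <= c.

Lemma Iint_left : I a.
Proof. by rewrite /Iint /= in_itv /= lexx lerDl ler01. Qed.

Lemma measurable_Iint : measurable I.
Proof. exact: measurable_itv. Qed.

Lemma measure_Iint : mu I = 1%:E.
Proof.
rewrite /Iint lebesgue_measure_itv /= ifT; last by rewrite lte_fin ltrDl.
by rewrite -EFinB addrAC subrr add0r.
Qed.

Lemma bdd_meas_integrable f : bdd_meas f -> mu.-integrable I (EFin \o f).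
Proof.
move=> [mf [c hc]]; apply: measurable_bounded_integrable => //.
- exact: measurable_Iint.
- by rewrite [X in (X < _)%E]measure_Iint ltry.
rewrite /bounded_near; near=> M => x Ix /=; apply: le_trans (hc x Ix) _.
by near: M; apply: nbhs_pinfty_ge; exact: num_real.
Unshelve. all: by end_near. Qed.

Lemma bdd_meas_cst c : bdd_meas (fun=> c).
Proof. by split; [exact: measurable_cst | exists `|c|]. Qed.

Lemma bdd_measD f g : bdd_meas f -> bdd_meas g -> bdd_meas (fun x => f x + g x).
Proof.
move=> [mf [c hc]] [mg [c' hc']]; split; first exact: measurable_funD.
by exists (c + c') => x Ix; apply: le_trans (ler_normD _ _) _; exact: lerD (hc x Ix) (hc' x Ix).
Qed.

Lemma bdd_measN f : bdd_meas f -> bdd_meas (fun x => - f x).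
Proof.
move=> [mf [c hc]]; split; first exact: measurableT_comp.
by exists c => x Ix; rewrite normrN; exact: hc.
Qed.

Lemma bdd_measM f g : bdd_meas f -> bdd_meas g -> bdd_meas (fun x => f x * g x).
Proof.
move=> [mf [c hc]] [mg [c' hc']]; split; first exact: measurable_funM.
by exists (c * c') => x Ix; rewrite normrM; apply: ler_pM => //; [exact: hc | exact: hc'].
Qed.

Lemma Rint_le f g : bdd_meas f -> bdd_meas g -> (forall x, I x -> f x <= g x) ->
  \int[mu]_(x in I) f x <= \int[mu]_(x in I) g x.
Proof.
move=> bf bg fg; apply: le_Rintegral => //; first exact: measurable_Iint.
  exact: bdd_meas_integrable.
exact: bdd_meas_integrable.
Qed.

(* Since [|I| = 1], integrating an affine expression [c g + c'] over [I]
   gives [c (int g) + c']. *)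
Lemma Rint_affine c c' g : bdd_meas g ->
  \int[mu]_(x in I) (c * g x + c') = c * \int[mu]_(x in I) g x + c'.
Proof.
move=> bg; have bcg : bdd_meas (fun x => c * g x) by apply: bdd_measM => //; exact: bdd_meas_cst.
rewrite RintegralD; [|exact: measurable_Iint|exact: bdd_meas_integrable|].
  rewrite RintegralZl; [|exact: measurable_Iint|exact: bdd_meas_integrable].
  rewrite Rintegral_cst; last exact: measurable_Iint.
  by rewrite [X in fine X](_ : _ = 1%:E) /= ?mulr1 //; exact: measure_Iint.
exact/bdd_meas_integrable/bdd_meas_cst.
Qed.

Lemma Rint_cst c : \int[mu]_(x in I) c = c.
Proof.
have := Rint_affine 0 c (bdd_meas_cst 0).
by under eq_Rintegral do rewrite mul0r add0r; rewrite mul0r add0r.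
Qed.
End IntervalIntegral.

Lemma bdd_meas_kernel (R : realType) (a : R) k k0 k1 xi :
  kernel_hyp a k k0 k1 -> Iint a xi -> bdd_meas a (fun eta => k xi eta).
Proof.
move=> [mk [k00 hk]] Ixi; split.
  have mII : measurable (Iint a `*` Iint a) by apply: measurableX; exact: measurable_Iint.
  apply: (measurable_comp mII _ mk (measurable_funTS (pair1_measurable xi))) => //.
  by move=> _ [eta Ieta <-]; split.
exists k1 => eta Ieta; have /andP[k0_le le_k1] := hk xi eta Ixi Ieta.
by rewrite ger0_norm // (le_trans (ltW k00) k0_le).
Qed.

Lemma bdd_meas_section (R : realType) d (a : R) (v : 'rV[R]_d -> R -> R) x :
  admissible a v -> bdd_meas a (v x).
Proof. by move=> [_ [mv [B hB]]]; split; [exact: mv | exists B => eta; exact: hB]. Qed.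

Lemma bdd_meas_coupling (R : realType) d (a : R) k k0 k1 (v : 'rV[R]_d -> R -> R) x xi :
  kernel_hyp a k k0 k1 -> admissible a v -> Iint a xi ->
  bdd_meas a (fun eta => k xi eta * (v x xi - v x eta)).
Proof.
move=> hk hv Ixi; apply: bdd_measM; first exact: bdd_meas_kernel hk Ixi.
by apply: bdd_measD; [exact: bdd_meas_cst | apply: bdd_measN; exact: bdd_meas_section].
Qed.

(* Coercivity (B1) turned into a gradient bound: if [G <= c1 t^(m-1)] with
   [t >= 1], then [c1 p^m <= W] forces [p <= t + W / G]. *)
Lemma coercive_bound (R : realType) (c1 m t G W p : R) : 0 < c1 -> 1 < m -> 1 <= t ->
  G <= c1 * t `^ (m - 1) -> 0 < G -> 0 <= p -> c1 * p `^ m <= W -> p <= t + W / G.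
Proof.
move=> c10 m1 t1 tG G0 p0 hW.
have W0 : 0 <= W by apply: le_trans hW; apply: mulr_ge0; [exact: ltW | exact: powR_ge0].
have WG0 : 0 <= W / G by apply: divr_ge0 => //; exact: ltW.
have [pt|tp] := leP p t; first by lra.
have pm : p `^ m = p `^ (m - 1) * p.
  have := @powRD _ p (m - 1) 1; rewrite subrK powRr1 //; apply.
  by apply/implyP => _; rewrite gt_eqF //; lra.
have tp' : t `^ (m - 1) <= p `^ (m - 1) by apply: ge0_ler_powR; rewrite ?nnegrE; lra.
suff : p <= W / G by lra.
rewrite ler_pdivlMr //; apply: le_trans hW; rewrite pm mulrA [p * G]mulrC.
apply: ler_wpM2r; first lra.
by apply: le_trans tG _; apply: ler_wpM2l => //; exact: ltW.
Qed.

Lemma coercive_threshold (R : realType) (c1 m G : R) : 0 < c1 -> 1 < m -> 0 < G ->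
  exists t, 1 <= t /\ G <= c1 * t `^ (m - 1).
Proof.
move=> c10 m1 G0; exists (Num.max 1 ((G / c1) `^ (m - 1)^-1)); split.
  by rewrite le_max lexx.
have GC0 : 0 <= G / c1 by apply: divr_ge0; exact: ltW.
have root : ((G / c1) `^ (m - 1)^-1) `^ (m - 1) = G / c1.
  by rewrite -powRrM mulVf ?powRr1 // gt_eqF // subr_gt0.
rewrite mulrC -ler_pdivrMr // -[X in X <= _]root.
apply: ge0_ler_powR; rewrite ?nnegrE ?powR_ge0 //; first by rewrite subr_ge0 ltW.
by rewrite le_max lexx orbT.
Qed.

Section Coupling.
Variables (R : realType) (d : nat) (a : R) (k : R -> R -> R) (k0 k1 : R).
Variable v : 'rV[R]_d -> R -> R.
Hypotheses (hk : kernel_hyp a k k0 k1) (hv : admissible a v).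
Local Notation I := (Iint a).
Local Notation Th := (Theta a k v).

Lemma kernel_bounds xi eta : I xi -> I eta -> k0 <= k xi eta <= k1.
Proof. by case: hk => _ [_ h]; exact: h. Qed.

Lemma kernel_k0_gt0 : 0 < k0.
Proof. by case: hk => _ []. Qed.

Lemma kernel_k1_gt0 : 0 < k1.
Proof.
have /andP[k0_le le_k1] := kernel_bounds (Iint_left a) (Iint_left a).
exact: lt_le_trans kernel_k0_gt0 (le_trans k0_le le_k1).
Qed.

Lemma Theta_ge_cst x xi lo : I xi ->
  (forall eta, I eta -> lo <= k xi eta * (v x xi - v x eta)) -> lo <= Th x xi.
Proof.
move=> Ixi h; rewrite -[lo](Rint_cst a).
by apply: Rint_le => //; [exact: bdd_meas_cst | exact: bdd_meas_coupling hk hv Ixi].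
Qed.

Lemma Theta_shift x y xi c : I xi -> 0 <= c ->
  (forall eta, I eta -> v x xi - v x eta <= v y xi - v y eta + c) ->
  Th x xi <= Th y xi + k1 * c.
Proof.
move=> Ixi c0 incr; rewrite -[Th y xi]mul1r -Rint_affine; last exact: bdd_meas_coupling hk hv Ixi.
apply: Rint_le => [||eta Ieta]; first exact: bdd_meas_coupling hk hv Ixi.
  apply: bdd_measD; last exact: bdd_meas_cst.
  by apply: bdd_measM; [exact: bdd_meas_cst | exact: bdd_meas_coupling hk hv Ixi].
have /andP[k0_le le_k1] := kernel_bounds Ixi Ieta; have := kernel_k0_gt0.
have := ler_wpM2l (_ : 0 <= k xi eta) (incr eta Ieta).
have := ler_wpM2r c0 le_k1.
by rewrite mulrDr mul1r; nra.
Qed.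

(* Near-
   maximal values of [v] are approached along sections; at their maximum
   point the coupling term is almost nonnegative. *)
Lemma max_principle alpha M : 0 < alpha ->
  (forall xi x1, I xi -> (forall w, v w xi <= v x1 xi) -> alpha * v x1 xi + Th x1 xi <= M) ->
  forall x xi, I xi -> alpha * v x xi <= M.
Proof.
move=> alpha0 at_max x xi Ixi.
have [slices [_ [B hB]]] := hv.
pose E := [set r | exists y eta, I eta /\ r = v y eta].
have hE : has_sup E.
  split; first by exists (v x xi), x, xi.
  by exists B => r [y [eta [Ieta ->]]]; have := hB y eta Ieta; rewrite ler_norml => /andP[_ ->].
have E_ub y eta : I eta -> v y eta <= sup E.
  by move=> Ieta; apply: sup_upper_bound => //; exists y, eta.
suff supE : alpha * sup E <= M by apply: le_trans supE; rewrite ler_pM2l // E_ub.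
apply/ler_addgt0Pr => e e0.
have ka0 : 0 < k1 + alpha by have := kernel_k1_gt0; lra.
pose eps := e / (k1 + alpha).
have eps0 : 0 < eps by apply: divr_gt0.
have epsE : (k1 + alpha) * eps = e by rewrite /eps mulrC divfK // gt_eqF.
have [_ [y [xi0 [Ixi0 ->]]] near_sup] := sup_adherent eps0 hE.
have [cont per] := slices xi0 Ixi0.
have [x1 x1_max] := periodic_max per cont.
have Th_x1 : - (k1 * eps) <= Th x1 xi0.
  apply: Theta_ge_cst => // eta Ieta.
  have := E_ub x1 eta Ieta; have := x1_max y.
  have /andP[k0_le le_k1] := kernel_bounds Ixi0 Ieta; have := kernel_k0_gt0.
  by nra.
have := at_max xi0 x1 Ixi0 x1_max.
have : alpha * sup E <= alpha * v x1 xi0 + alpha * eps.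
  by rewrite -mulrDr ler_pM2l //; have := x1_max y; lra.
nra.
Qed.

Definition slice_sup (x : 'rV[R]_d) : R := sup [set r | exists2 eta, I eta & r = v x eta].
Definition gap (x : 'rV[R]_d) (eta : R) : R := slice_sup x - v x eta.

Lemma slice_sup_has x : has_sup [set r | exists2 eta, I eta & r = v x eta].
Proof.
have [_ [_ [B hB]]] := hv.
split; first by exists (v x a), a => //; exact: Iint_left.
by exists B => r [eta Ieta ->]; have := hB x eta Ieta; rewrite ler_norml => /andP[_ ->].
Qed.

Lemma gap_ge0 x eta : I eta -> 0 <= gap x eta.
Proof.
by move=> Ieta; rewrite subr_ge0; apply: sup_upper_bound; [exact: slice_sup_has | exists eta].
Qed.

Lemma gap_small x : exists2 eta, I eta & gap x eta < 1.
Proof.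
have [_ [eta Ieta ->] near] := sup_adherent ltr01 (slice_sup_has x).
by exists eta => //; rewrite /gap /slice_sup; lra.
Qed.

Lemma bdd_meas_gap x : bdd_meas a (gap x).
Proof. by apply: bdd_measD; [exact: bdd_meas_cst | apply: bdd_measN; exact: bdd_meas_section]. Qed.

Lemma Theta_ge_gap x xi : I xi -> - (k1 * gap x xi) <= Th x xi.
Proof.
move=> Ixi; apply: Theta_ge_cst => // eta Ieta.
have := gap_ge0 x Ieta; have := gap_ge0 x Ixi; rewrite /gap.
have /andP[k0_le le_k1] := kernel_bounds Ixi Ieta; have := kernel_k0_gt0.
nra.
Qed.

Lemma gap_bounded : exists B, forall x xi, I xi -> gap x xi <= B.
Proof.
have [_ [_ [B hB]]] := hv; exists (B + B) => x xi Ixi; rewrite /gap.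
have := hB x xi Ixi; rewrite ler_norml => /andP[? _].
suff : slice_sup x <= B by lra.
apply: ge_sup; first exact: (slice_sup_has x).1.
by move=> _ [eta Ieta ->]; have := hB x eta Ieta; rewrite ler_norml => /andP[_ ->].
Qed.

(* Conversely a bound [|Theta v| <= T] bounds the gap: integrating the
   identity [v (x, xi) - v (x, eta) = gap x eta - gap x xi] against the
   kernel, first at a near-maximal [xi], then at an arbitrary one. *)
Lemma gap_bound T : (forall x xi, I xi -> `|Th x xi| <= T) ->
  forall x xi, I xi -> gap x xi <= (k1 * ((T + k1) / k0) + T) / k0.
Proof.
move=> Th_bound x xi Ixi; have k00 := kernel_k0_gt0; have k10 := kernel_k1_gt0.
have [xs Ixs gap_xs] := gap_small x.
pose J := \int[@lebesgue_measure R]_(eta in I) gap x eta.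
have incr xi' eta : v x xi' - v x eta = gap x eta - gap x xi' by rewrite /gap; ring.
have J_le : k0 * J + - k1 <= Th x xs.
  rewrite -Rint_affine; last exact: bdd_meas_gap.
  apply: Rint_le => [||eta Ieta]; last 1 first.
  - rewrite incr; have := gap_ge0 x Ieta; have := gap_ge0 x Ixs.
    by have /andP[? ?] := kernel_bounds Ixs Ieta; nra.
  - apply: bdd_measD; last exact: bdd_meas_cst.
    by apply: bdd_measM; [exact: bdd_meas_cst | exact: bdd_meas_gap].
  - exact: bdd_meas_coupling hk hv Ixs.
have Th_le : Th x xi <= k1 * J + - (k0 * gap x xi).
  rewrite -Rint_affine; last exact: bdd_meas_gap.
  apply: Rint_le => [||eta Ieta]; first exact: bdd_meas_coupling hk hv Ixi.
    apply: bdd_measD; last exact: bdd_meas_cst.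
    by apply: bdd_measM; [exact: bdd_meas_cst | exact: bdd_meas_gap].
  rewrite incr; have := gap_ge0 x Ieta; have := gap_ge0 x Ixi.
  by have /andP[? ?] := kernel_bounds Ixi Ieta; nra.
have := Th_bound x xs Ixs; have := Th_bound x xi Ixi; rewrite !ler_norml => /andP[? ?] /andP[? ?].
have J_bound : J <= (T + k1) / k0 by rewrite ler_pdivlMr // mulrC; lra.
have : k1 * J <= k1 * ((T + k1) / k0) by rewrite ler_wpM2l // ltW.
by rewrite ler_pdivlMr // mulrC; lra.
Qed.

Lemma admissible_opp : admissible a (fun x xi => - v x xi).
Proof.
have [slices [meas [B hB]]] := hv; split; last split.
- move=> xi Ixi; have [cont per] := slices xi Ixi; split.
    by move=> x; exact: (continuousN (cont x)).
  by move=> i x; rewrite /= per.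
- by move=> x; apply: measurableT_comp => //; exact: meas.
- by exists B => x xi Ixi; rewrite normrN; exact: hB.
Qed.

Lemma Theta_opp x xi : I xi -> Theta a k (fun x xi => - v x xi) x xi = - Th x xi.
Proof.
move=> Ixi; transitivity
  (\int[@lebesgue_measure R]_(eta in I) (-1 * (k xi eta * (v x xi - v x eta)) + 0)).
  by apply: eq_Rintegral => eta _ /=; ring.
by rewrite Rint_affine ?addr0 ?mulN1r //; exact: bdd_meas_coupling hk hv Ixi.
Qed.
End Coupling.

(* For a bound [U] on the gap,
   [lip_bound U] bounds the Lipschitz constant of the sections of [v] and
   [theta_bound U] the coupling term; [gap_star] is the bound on the gap
   obtained by absorption. *)
Section Constants.
Variables (R : realType) (k0 k1 c2 M t G D : R).

Definition lip_bound (U : R) : R := t + (c2 + M + k1 * U) / G.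
Definition theta_bound (U : R) : R := M + M + k1 * (lip_bound U * D).
Definition gap_factor : R := (k1 / k0 + 1) / k0.
Definition gap_star : R := 2 * (gap_factor * theta_bound 0 + k1 * k1 / (k0 * k0)).

Hypotheses (k00 : 0 < k0) (k10 : 0 < k1) (c20 : 0 < c2) (M0 : 0 <= M)
  (t1 : 1 <= t) (G0 : 0 < G) (D0 : 0 <= D).

Lemma gap_factor_ge0 : 0 <= gap_factor.
Proof. by rewrite divr_ge0 ?addr_ge0 ?divr_ge0 ?ltW. Qed.

Lemma lip_bound_gt0 U : 0 <= U -> 0 < lip_bound U.
Proof.
move=> U0; have : 0 <= (c2 + M + k1 * U) / G.
  by apply: divr_ge0; [have := c20; have := k10; have := M0; nra | exact: ltW].
by rewrite /lip_bound; have := t1; lra.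
Qed.

Lemma theta_bound_ge0 U : 0 <= U -> 0 <= theta_bound U.
Proof.
move=> U0; have := mulr_ge0 (ltW k10) (mulr_ge0 (ltW (lip_bound_gt0 U0)) D0).
by rewrite /theta_bound; have := M0; lra.
Qed.

Lemma gap_star_ge0 : 0 <= gap_star.
Proof.
apply: mulr_ge0 => //; apply: addr_ge0.
  by apply: mulr_ge0; [exact: gap_factor_ge0 | exact: theta_bound_ge0].
by apply: divr_ge0; apply: mulr_ge0; exact: ltW.
Qed.

Lemma lip_bound_mono U V : U <= V -> lip_bound U <= lip_bound V.
Proof.
move=> UV; have : k1 * U <= k1 * V by rewrite ler_wpM2l // ltW.
rewrite /lip_bound lerD2l ler_pM2r ?invr_gt0 //; lra.
Qed.

Lemma theta_bound_mono U V : U <= V -> theta_bound U <= theta_bound V.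
Proof.
move=> UV; rewrite /theta_bound lerD2l; apply: ler_wpM2l; first exact: ltW.
by apply: ler_wpM2r => //; exact: lip_bound_mono.
Qed.

(* Absorption: [theta_bound] is affine in [U] with slope [k1^2 D / G], which
   is small against [gap_factor] once [G] is large. *)
Lemma gap_absorb U : 2 * (gap_factor * (k1 * k1 * D)) <= G -> 0 <= U ->
  U <= gap_factor * theta_bound U + k1 * k1 / (k0 * k0) -> U <= gap_star.
Proof.
move=> G_large U0 U_le.
have affine : theta_bound U = theta_bound 0 + k1 * k1 * D / G * U.
  by rewrite /theta_bound /lip_bound; field; rewrite gt_eqF.
have slope : gap_factor * (k1 * k1 * D / G) <= 1 / 2.
  by rewrite mulrA ler_pdivrMr //; lra.
have := ler_wpM2r U0 slope; have := gap_factor_ge0.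
move: U_le; rewrite affine /gap_star mulrDr mulrA; nra.
Qed.
End Constants.

Section Solution.
Variables (R : realType) (d : nat) (a : R) (k : R -> R -> R) (k0 k1 : R).
Variables (H : 'rV[R]_d -> 'rV[R]_d -> R -> R) (alpha M : R) (v : 'rV[R]_d -> R -> R).
Hypotheses (hk : kernel_hyp a k k0 k1) (alpha0 : 0 < alpha) (hv : visc_sol alpha a H k v)
  (hM : forall x xi, Iint a xi -> `|H x 0 xi| <= M).
Local Notation I := (Iint a).
Local Notation Th := (Theta a k v).

Lemma sol_admissible : admissible a v.
Proof. by case: hv. Qed.

Lemma sol_slice xi : I xi -> continuous (fun x => v x xi) /\ periodic (fun x => v x xi).
Proof. by case: sol_admissible => slices _; exact: slices. Qed.

Lemma sol_H0 x xi : I xi -> - M <= H x 0 xi <= M.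
Proof. by move=> Ixi; rewrite -ler_norml; exact: hM. Qed.

(* Constants are C^1 test functions with zero gradient: at an extremum of a
   section the equation holds with [p = 0]. *)
Lemma C1_cst0 : C1 (fun _ : 'rV[R]_d => (0:R)).
Proof.
move=> i; split; first by move=> x; case: (is_derive_cst (0:R) x (evec R i)).
have -> : (fun x => 'D_(evec R i) (fun _ : 'rV[R]_d => (0:R)) x) = (fun _ => 0).
  by apply/funext => x; case: (is_derive_cst (0:R) x (evec R i)).
exact: cst_continuous.
Qed.

Lemma grad_cst0 z : grad (fun _ : 'rV[R]_d => (0:R)) z = 0.
Proof. by apply/rowP => i; rewrite !mxE; case: (is_derive_cst (0:R) z (evec R i)). Qed.

Lemma sub_at_max xi x1 : I xi -> (forall w, v w xi <= v x1 xi) ->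
  alpha * v x1 xi + H x1 0 xi + Th x1 xi <= 0.
Proof.
move=> Ixi x1_max; have [_ [sub _]] := hv.
rewrite -(grad_cst0 x1); apply: sub => //; first exact: C1_cst0.
by apply: filterE => w; rewrite !subr0.
Qed.

Lemma super_at_min xi x1 : I xi -> (forall w, v x1 xi <= v w xi) ->
  0 <= alpha * v x1 xi + H x1 0 xi + Th x1 xi.
Proof.
move=> Ixi x1_min; have [_ [_ super]] := hv.
rewrite -(grad_cst0 x1); apply: super => //; first exact: C1_cst0.
by apply: filterE => w; rewrite !subr0.
Qed.

(* The classical bound [|alpha v| <= M = sup |H(., 0, .)|], by the maximum
   principle applied to [v] and to [- v]. *)
Lemma alpha_v_bound x xi : I xi -> - M <= alpha * v x xi <= M.
Proof.
move=> Ixi; apply/andP; split.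
  rewrite lerNl -mulrN.
  apply: (max_principle hk (admissible_opp sol_admissible)) => // xi0 x1 Ixi0 x1_max.
  rewrite (Theta_opp hk sol_admissible) //.
  have x1_min w : v x1 xi0 <= v w xi0 by have := x1_max w; rewrite /= lerN2.
  by have := super_at_min Ixi0 x1_min; have := sol_H0 x1 Ixi0; lra.
apply: (max_principle hk sol_admissible) => // xi0 x1 Ixi0 x1_max.
by have := sub_at_max Ixi0 x1_max; have := sol_H0 x1 Ixi0; lra.
Qed.

(* A bound [U] on the gap gives a Lipschitz bound: at a touching point the
   subsolution inequality and (B1) give [c1 |p|^m <= c2 + M + k1 U]. *)
Lemma lipschitz_of_gap c1 c2 m t G U :
  (forall x p xi, I xi -> c1 * (enorm p `^ m) - c2 <= H x p xi) ->
  0 < c1 -> 0 < c2 -> 1 < m -> 1 <= t -> 0 < G -> G <= c1 * t `^ (m - 1) ->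
  0 <= U -> (forall x xi, I xi -> gap a v x xi <= U) ->
  forall xi, I xi -> lipschitz_const (fun x => v x xi) (lip_bound k1 c2 M t G U).
Proof.
move=> B1H c10 c20 m1 t1 G0 tG U0 gapU xi Ixi.
have [cont _] := sol_slice Ixi; have [_ [_ [B hB]]] := sol_admissible.
have M0 : 0 <= M by have := sol_H0 0 Ixi; lra.
apply: (@lipschitz_of_test _ _ _ B) => //.
- by move=> x; exact: hB.
- move=> f z Cf z_max.
  have sub_z : alpha * v z xi + H z (grad f z) xi + Th z xi <= 0.
    by have [_ [sub _]] := hv; apply: sub => //; apply: filterE; exact: z_max.
  have := B1H z (grad f z) xi Ixi; have := Theta_ge_gap hk sol_admissible z Ixi.
  have /andP[? ?] := alpha_v_bound z Ixi.
  have := ler_wpM2l (ltW (kernel_k1_gt0 hk)) (gapU z xi Ixi).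
  move=> *; apply: (coercive_bound c10 m1 t1 tG G0 (enorm_ge0 _)); lra.
- by apply/ltW/lip_bound_gt0 => //; exact: kernel_k1_gt0 hk.
Qed.

(* A Lipschitz bound [L] bounds the coupling term: comparing with an extremum
   point of the section, where the equation bounds [Theta], the increments of
   [v] change by at most the oscillation [L sqrt d] of a section. *)
Lemma Theta_bound L : 0 <= L ->
  (forall eta, I eta -> lipschitz_const (fun x => v x eta) L) ->
  forall x xi, I xi -> `|Th x xi| <= M + M + k1 * (L * Num.sqrt d%:R).
Proof.
move=> L0 lipL x xi Ixi; have [cont per] := sol_slice Ixi.
have osc0 : 0 <= L * Num.sqrt d%:R by rewrite mulr_ge0 ?sqrtr_ge0.
have osc y z eta : I eta -> `|v y eta - v z eta| <= L * Num.sqrt d%:R.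
  move=> Ieta; have [_ per_eta] := sol_slice Ieta.
  exact: periodic_osc per_eta (lipL eta Ieta) L0 y z.
have H0 := sol_H0; have av := alpha_v_bound.
rewrite ler_norml; apply/andP; split.
  have [x1 x1_min] := periodic_min per cont.
  have := super_at_min Ixi x1_min; have := H0 x1 xi Ixi; have := av x1 xi Ixi.
  move=> *; suff : Th x1 xi <= Th x xi + k1 * (L * Num.sqrt d%:R) by lra.
  apply: (Theta_shift hk sol_admissible) => // eta Ieta.
  have := x1_min x; have := osc x1 x eta Ieta.
  by rewrite ler_norml => /andP[? ?]; lra.
have [x1 x1_max] := periodic_max per cont.
have := sub_at_max Ixi x1_max; have := H0 x1 xi Ixi; have := av x1 xi Ixi.
move=> *; suff : Th x xi <= Th x1 xi + k1 * (L * Num.sqrt d%:R) by lra.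
apply: (Theta_shift hk sol_admissible) => // eta Ieta.
have := x1_max x; have := osc x x1 eta Ieta.
by rewrite ler_norml => /andP[? ?]; lra.
Qed.

(* Let [U] be the supremum of the gap.  Then the
   sections are [lip_bound U]-Lipschitz, hence [|Theta v| <= theta_bound U],
   hence [U <= gap_factor * theta_bound U + k1^2/k0^2]; for [G] large this
   absorbs into [U <= gap_star], a bound independent of [alpha] and [v]. *)
Lemma sol_estimate c1 c2 m t G :
  (forall x p xi, I xi -> c1 * (enorm p `^ m) - c2 <= H x p xi) ->
  0 < c1 -> 0 < c2 -> 1 < m -> 1 <= t -> 0 < G -> G <= c1 * t `^ (m - 1) ->
  2 * (gap_factor k0 k1 * (k1 * k1 * Num.sqrt d%:R)) <= G ->
  let U := gap_star k0 k1 c2 M t G (Num.sqrt d%:R) in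
  (forall xi, I xi -> lipschitz_const (fun x => v x xi) (lip_bound k1 c2 M t G U)) /\
  (forall x xi, I xi -> `|Th x xi| <= theta_bound k1 c2 M t G (Num.sqrt d%:R) U).
Proof.
move=> B1H c10 c20 m1 t1 G0 tG G_large U.
have k00 := kernel_k0_gt0 hk; have k10 := kernel_k1_gt0 hk.
have M0 : 0 <= M by have := sol_H0 0 (Iint_left a); lra.
pose gaps := [set r | exists x xi, I xi /\ r = gap a v x xi].
have gaps_sup : has_sup gaps.
  have [Bg gapB] := gap_bounded sol_admissible.
  split; first by exists (gap a v 0 a), 0, a; split => //; exact: Iint_left.
  by exists Bg => _ [x [xi [Ixi ->]]]; exact: gapB.
pose Us := sup gaps.
have gap_Us x xi : I xi -> gap a v x xi <= Us.
  by move=> Ixi; apply: sup_upper_bound => //; exists x, xi.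
have Us0 : 0 <= Us := le_trans (gap_ge0 hv.1 0 (Iint_left a)) (gap_Us 0 a (Iint_left a)).
have lip_Us := lipschitz_of_gap B1H c10 c20 m1 t1 G0 tG Us0 gap_Us.
have Th_Us := Theta_bound (ltW (lip_bound_gt0 k10 c20 M0 t1 G0 Us0)) lip_Us.
have Us_star : Us <= U.
  set T := theta_bound k1 c2 M t G (Num.sqrt d%:R) Us.
  have gap_T := gap_bound hk hv.1 (T := T) Th_Us.
  apply: (gap_absorb k00 k10 G0 G_large Us0); apply: ge_sup; first exact: gaps_sup.1.
  move=> _ [x [xi [Ixi ->]]].
  suff -> : gap_factor k0 k1 * T + k1 * k1 / (k0 * k0) = (k1 * ((T + k1) / k0) + T) / k0.
    exact: gap_T.
  by rewrite /gap_factor; field; rewrite gt_eqF.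
split=> [xi Ixi x y | x xi Ixi].
  apply: le_trans (lip_Us xi Ixi x y) _.
  by rewrite ler_wpM2r ?enorm_ge0 // lip_bound_mono.
apply: le_trans (Th_Us x xi Ixi) _.
exact: (theta_bound_mono c2 M t k10 G0 (sqrtr_ge0 _) Us_star).
Qed.
End Solution.

Unset Implicit Arguments.

(* Theorem: under (B1), the gradients [Dv^alpha] and the coupling terms
   [Theta v^alpha] are bounded uniformly in [alpha > 0]. *)
Theorem mainTheorem7 (R : realType) (d : nat) (a : R) (k : R -> R -> R) (k0 k1 : R)
    (H : 'rV[R]_d -> 'rV[R]_d -> R -> R) :
  kernel_hyp a k k0 k1 -> ham_hyp a H -> B1 a H -> B2 a H ->
  exists C : R, 0 < C /\
    forall (alpha : R) (v : 'rV[R]_d -> R -> R), 0 < alpha ->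
      visc_sol alpha a H k v ->
      exists LD LT : R, 0 <= LD /\ 0 <= LT /\ LD + LT <= C /\
        {ae @lebesgue_measure R, forall xi, Iint a xi ->
           lipschitz_const (fun x => v x xi) LD} /\
        {ae @lebesgue_measure R, forall xi, Iint a xi ->
           forall x, `|Theta a k v x xi| <= LT}.
Proof.
move=> hk [_ [_ H_bounded]] [c1 [c2 [m [c10 [c20 [m1 B1H]]]]]] _.
have [M hM] := H_bounded 0.
have k00 := kernel_k0_gt0 hk; have k10 := kernel_k1_gt0 hk.
have M0 : 0 <= M := le_trans (normr_ge0 _) (hM 0 a (Iint_left a)).
pose D : R := Num.sqrt d%:R; have D0 : 0 <= D := sqrtr_ge0 _.
pose G := 2 * (gap_factor k0 k1 * (k1 * k1 * D)) + 1.
have G0 : 0 < G.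
  have := gap_factor_ge0 k00 k10; have := mulr_ge0 (mulr_ge0 (ltW k10) (ltW k10)) D0.
  by rewrite /G; nra.
have [t [t1 tG]] := coercive_threshold c10 m1 G0.
pose U := gap_star k0 k1 c2 M t G D.
have U0 : 0 <= U := gap_star_ge0 k00 k10 c20 M0 t1 G0 D0.
pose LD := lip_bound k1 c2 M t G U; pose LT := theta_bound k1 c2 M t G D U.
have LD0 : 0 < LD := lip_bound_gt0 k10 c20 M0 t1 G0 U0.
have LT0 : 0 <= LT := theta_bound_ge0 k10 c20 M0 t1 G0 D0 U0.
exists (LD + LT); split; first by lra.
move=> alpha v alpha0 hv.
have [lip Th] := sol_estimate hk alpha0 hv hM B1H c10 c20 m1 t1 G0 tG ltac:(by rewrite /G lerDl).
exists LD, LT; do 3 (split; first by lra).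
by split; apply: aeW => xi Ixi; [exact: lip | move=> x; exact: Th].
Qed.
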